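(* Let $\mathcal{A}$ be a finite abelian group with $|\mathcal{A}|\ge 3$. Let $G$ be the graph consisting of a $5$-cycle $v_1v_2v_3v_4v_5v_1$ together with one further neighbour $u$ of $v_2$, where $u$ is a support vertex all of whose neighbours other than $v_2$ are pendant vertices (so $d(v_2)=3$). Then $G$ is $\mathcal{A}$-vertex magic if and only if $|\mathcal{A}|$ is even.
   Context: A pendant vertex has degree $1$; a support vertex is adjacent to at least one pendant vertex. A map $\ell:V(G)\to\mathcal{A}\setminus\{0\}$ is an $\mathcal{A}$-vertex magic labeling if there is $\mu\in\mathcal{A}$ with $\sum_{w\in N(v)}\ell(w)=\mu$ for every vertex $v$; $G$ is $\mathcal{A}$-vertex magic if such a labeling exists. *)

From mathcomp Require Import all_boot all_order all_algebra.
Set Implicit Arguments. Unset Strict Implicit. Unset Printing Implicit Defensive.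
Import GRing.Theory.
Local Open Scope ring_scope.

Definition vertex_magic (T : finType) (e : rel T) (A : zmodType) : Prop :=
  exists l : T -> A, (forall v, l v != 0) /\
    exists mu : A, forall v, \sum_(w | e v w) l w = mu.

(* The graph of Corollary 3.11, with k >= 1 pendant neighbours of u.
   Vertices 'I_(k+6): 0,1,2,3,4 = v1,...,v5 (5-cycle), 5 = u (adjacent to v2),
   6,...,k+5 = the pendant neighbours of u. *)
Definition Gadj (k : nat) : rel 'I_(k + 6) := fun x y =>
  let i := nat_of_ord x in let j := nat_of_ord y in
  [|| [&& (i < 5)%N, (j < 5)%N & (i == (j + 1) %% 5)%N || (j == (i + 1) %% 5)%N],
      (i == 1)%N && (j == 5)%N, (i == 5)%N && (j == 1)%N,
      (i == 5)%N && (6 <= j)%N | (6 <= i)%N && (j == 5)%N].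

(* Every vertex sum of a magic labeling equals the label of [u], which is
   the sum seen by a pendant vertex.  Comparing the sums around the 5-cycle
   forces [l v1 = l v3], and then the sum at [v2] gives [l v1 + l v1 = 0]:
   the nonzero label [l v1] is an element of order 2, which exists exactly
   when [|A|] is even (Cauchy).  Conversely, with [a] of order 2 and any
   [b] outside [{0, a}] (here [|A| >= 3] is used), label [v1, v2, v3] by [a],
   [v4, v5] by [b], [u] by [a + b], and the pendants by nonzero elements
   summing to [b]. *)

From mathcomp Require Import all_boot all_order all_algebra.
From mathcomp Require Import all_fingroup all_solvable zify.
Set Implicit Arguments. Unset Strict Implicit. Unset Printing Implicit Defensive.
Import GRing.Theory FinRing.Theory.
Local Open Scope ring_scope.

Lemma sum_pred2 (I : finType) (M : nmodType) (P : pred I) (F : I -> M) i j :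
  i != j -> P =1 pred2 i j -> \sum_(w | P w) F w = F i + F j.
Proof.
move=> neq_ij eq_P; rewrite (bigD1 i) ?eq_P /= ?eqxx //; congr (_ + _).
apply: big_pred1 => w /=; rewrite eq_P /=.
by case: (eqVneq w i) => [->|]; rewrite ?(negbTE neq_ij) ?andbT.
Qed.

Lemma sum_pred3 (I : finType) (M : nmodType) (P : pred I) (F : I -> M) i j l :
  i != j -> i != l -> j != l -> P =1 pred3 i j l ->
  \sum_(w | P w) F w = F i + (F j + F l).
Proof.
move=> neq_ij neq_il neq_jl eq_P; rewrite (bigD1 i) ?eq_P /= ?eqxx //; congr (_ + _).
apply: sum_pred2 => // w /=; rewrite eq_P /=.
by case: (eqVneq w i) => [->|]; rewrite ?(negbTE neq_ij) ?(negbTE neq_il) ?andbT.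
Qed.

Lemma exists_notin_set2 (T : finType) (x y : T) :
  (2 < #|T|)%N -> exists z, z \notin [set x; y].
Proof.
move=> T_gt2; have /card_gt0P[z] : (0 < #|~: [set x; y]|)%N.
  by move: T_gt2 (cardsC [set x; y]) (cards2 x y); case: (x != y); lia.
by rewrite inE; exists z.
Qed.

Lemma mulrn_involution (A : zmodType) (a : A) n : a + a = 0 -> a *+ n = a *+ odd n.
Proof.
move=> aa; rewrite -{1}(odd_double_half n) mulrnDr -mul2n mulrnA mulr2n aa.
by rewrite mul0rn addr0.
Qed.

Section MagicGraph.
Variable k : nat.

Definition Gvtx i (lt_i6 : (i < 6)%N) : 'I_(k + 6) :=
  Ordinal (leq_trans lt_i6 (leq_addl k 6)).
Local Notation "''v_' i" := (@Gvtx i isT) (at level 8, i at level 2, format "''v_' i").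

Lemma sum_Gadj (M : nmodType) (l : 'I_(k + 6) -> M) v :
  \sum_(w | Gadj v w) l w =
  match val v with
  | 0 => l 'v_1 + l 'v_4
  | 1 => l 'v_0 + (l 'v_2 + l 'v_5)
  | 2 => l 'v_1 + l 'v_3
  | 3 => l 'v_2 + l 'v_4
  | 4 => l 'v_3 + l 'v_0
  | 5 => l 'v_1 + \sum_(w | (6 <= val w)%N) l w
  | _ => l 'v_5
  end.
Proof.
case: v => [[|[|[|[|[|[|m]]]]]] lt_v] /=.
- by apply: sum_pred2 => // -[[|[|[|[|[|w]]]]] ?].
- by apply: sum_pred3 => // -[[|[|[|[|[|[|w]]]]]] ?].
- by apply: sum_pred2 => // -[[|[|[|[|[|w]]]]] ?].
- by apply: sum_pred2 => // -[[|[|[|[|[|w]]]]] ?].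
- by apply: sum_pred2 => // -[[|[|[|[|[|w]]]]] ?].
- rewrite (bigD1 'v_1) //=; congr (_ + _); apply: eq_bigl.
  by case=> [[|[|[|[|[|[|w]]]]]] ?].
- by apply: big_pred1 => -[[|[|[|[|[|[|w]]]]]] ?].
Qed.

Lemma Gadj_magicP (A : zmodType) (l : 'I_(k + 6) -> A) mu : (0 < k)%N ->
  (forall v, \sum_(w | Gadj v w) l w = mu) <->
  [/\ [/\ l 'v_1 + l 'v_4 = mu, l 'v_0 + (l 'v_2 + l 'v_5) = mu,
          l 'v_1 + l 'v_3 = mu, l 'v_2 + l 'v_4 = mu & l 'v_3 + l 'v_0 = mu],
      l 'v_1 + \sum_(w | (6 <= val w)%N) l w = mu & l 'v_5 = mu].
Proof.
move=> k_gt0; split=> [sum_mu | [[e0 e1 e2 e3 e4] e5 e6] v].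
  have lt6k : (6 < k + 6)%N by rewrite -[6%N]add0n ltn_add2r.
  by split; first split;
    [ move: (sum_mu 'v_0) | move: (sum_mu 'v_1) | move: (sum_mu 'v_2)
    | move: (sum_mu 'v_3) | move: (sum_mu 'v_4) | move: (sum_mu 'v_5)
    | move: (sum_mu (Ordinal lt6k)) ]; rewrite sum_Gadj.
by rewrite sum_Gadj; case: (val v) => [|[|[|[|[|[|]]]]]].
Qed.

Lemma Gadj_magic_involution (A : zmodType) :
  (0 < k)%N -> vertex_magic (@Gadj k) A -> exists2 a : A, a != 0 & a + a = 0.
Proof.
move=> k_gt0 [l [l_neq0 [mu /(Gadj_magicP _ _ k_gt0) [[e0 e1 e2 e3 e4] _ e5]]]].
exists (l 'v_0) => //.
have l4 : l 'v_4 = l 'v_3 by apply: (addrI (l 'v_1)); rewrite e0 e2.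
have l2 : l 'v_2 = l 'v_0 by apply: (addIr (l 'v_3)); rewrite -{1}l4 e3 addrC e4.
by apply: (addIr mu); rewrite -addrA -{1}e5 -{2}l2 e1 add0r.
Qed.

Section InvolutionLabel.
Variables (A : zmodType) (a b : A).
Hypotheses (a_neq0 : a != 0) (aa : a + a = 0) (b_neq0 : b != 0) (b_neq_a : b != a).

(* The first pendant gets [b - a *+ k.-1] and the others fall off the list and
   get the default [a], so that the pendant labels sum to [b]. *)
Definition involution_label (m : nat) : A :=
  nth a [:: a; a; a; b; b; a + b; b - a *+ k.-1] m.

Lemma involution_label_neq0 m : involution_label m != 0.
Proof.
have oppa : - a = a by apply/eqP; rewrite eq_sym -addr_eq0 aa.
rewrite /involution_label; case: (ltnP m 7) => [lt_m7 | le7m]; last first.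
  by rewrite nth_default.
case: m lt_m7 => [|[|[|[|[|[|[|]]]]]]] //= _.
  by rewrite addrC addr_eq0 oppa.
by rewrite subr_eq0 mulrn_involution //; case: (odd _); rewrite ?mulr1n ?mulr0n.
Qed.

Lemma sum_involution_label_pendants : (0 < k)%N ->
  \sum_(w : 'I_(k + 6) | (6 <= val w)%N) involution_label (val w) = b.
Proof.
move=> k_gt0.
have -> : \sum_(w : 'I_(k + 6) | (6 <= val w)%N) involution_label (val w) =
          \sum_(6 <= i < k + 6) involution_label i by rewrite big_geq_mkord.
rewrite big_ltn -1?[6%N]add0n ?ltn_add2r // add0n.
rewrite (eq_big_nat _ _ (F2 := fun=> a)) => [|i /andP[le7i _]]; last first.
  by rewrite /involution_label nth_default.
by rewrite sumr_const_nat (_ : 7 = 1 + 6)%N // subnDr subn1 subrK.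
Qed.

Lemma Gadj_magic_of_involution : (0 < k)%N -> vertex_magic (@Gadj k) A.
Proof.
move=> k_gt0; exists (fun w => involution_label (val w)).
split=> [w | ]; first exact: involution_label_neq0.
exists (a + b); apply/Gadj_magicP; rewrite ?sum_involution_label_pendants //.
by split; first split; rewrite //= ?(addrA a a) ?aa ?add0r // addrC.
Qed.

End InvolutionLabel.

End MagicGraph.

Lemma even_card_involutionP (A : finZmodType) :
  reflect (exists2 a : A, a != 0 & a + a = 0) (~~ odd #|A|).
Proof.
apply: (iffP idP) => [even_A | [a a_neq0 aa]].
  have two_dvd_A : (2 %| #|[set: A]%G|)%N by rewrite cardsT dvdn2.
  have [a _ order_a] := Cauchy (isT : prime 2) two_dvd_A.
  exists a; last by rewrite -mulr2n -zmodXgE -order_a expg_order.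
  by apply: contra_eq_neq order_a => ->; rewrite -zmod1gE order1.
have order_a : #[a]%g = 2%N.
  by apply: nt_prime_order; rewrite ?zmodXgE ?zmod1gE ?mulr2n.
by rewrite -dvdn2 -order_a -cardsT order_dvdG ?inE.
Qed.

Theorem corollary3p11 (A : finZmodType) (k : nat) :
  (3 <= #|A|)%N -> (0 < k)%N ->
  (vertex_magic (@Gadj k) A <-> ~~ odd #|A|).
Proof.
move=> A_ge3 k_gt0; split=> [/(Gadj_magic_involution k_gt0) | /even_card_involutionP].
  by move/even_card_involutionP.
case=> a a_neq0 aa; have [b] := exists_notin_set2 0 a A_ge3.
rewrite !inE negb_or => /andP[b_neq0 b_neq_a].
exact: Gadj_magic_of_involution a_neq0 aa b_neq0 b_neq_a k_gt0.
Qed.
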